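(* Let $S(n)=\sum_{i=1}^{n}(-1)^{e(i)}$ for $n\ge1$. Then $$\liminf_{n\to\infty}S(n)=-\infty\qquad\text{and}\qquad\limsup_{n\to\infty}S(n)=+\infty.$$
   Context: The Stern polynomials $B_n(t)\in\mathbb{Z}[t]$ are defined by $B_0(t)=0$, $B_1(t)=1$, and for $n\geq 1$: $B_{2n}(t)=tB_n(t)$, $B_{2n+1}(t)=B_n(t)+B_{n+1}(t)$. For $n\geq1$ let $e(n)=\deg B_n(t)$. *)

From HB Require Import structures.
From mathcomp Require Import all_boot all_order all_algebra.
Set Implicit Arguments. Unset Strict Implicit. Unset Printing Implicit Defensive.
Import Order.TTheory GRing.Theory Num.Theory.
Local Open Scope ring_scope.

(* Stern polynomials, computed with fuel k (k >= n suffices):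
   B_0 = 0, B_1 = 1, B_{2m} = t B_m, B_{2m+1} = B_m + B_{m+1}. *)
Fixpoint stern_aux (k n : nat) : {poly int} :=
  match k with
  | 0%N => 0
  | k'.+1 =>
    if n == 0%N then 0
    else if n == 1%N then 1
    else if ~~ odd n then 'X * stern_aux k' n./2
    else stern_aux k' n./2 + stern_aux k' n./2.+1
  end.

Definition stern (n : nat) : {poly int} := stern_aux n n.

(* e(n) = deg B_n (for n >= 1, B_n <> 0, size = deg + 1). *)
Definition sdeg (n : nat) : nat := (size (stern n)).-1.

Definition Ssum (n : nat) : int := \sum_(1 <= i < n.+1) (-1) ^+ sdeg i.

From mathcomp Require Import all_boot all_order all_algebra zify ring.
From Stdlib Require Import Classical.
Set Implicit Arguments. Unset Strict Implicit. Unset Printing Implicit Defensive.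
Import Order.TTheory GRing.Theory Num.Theory.
Local Open Scope ring_scope.

(* Write s(n) = (-1)^e(n) and d(m) = e(m+1) - e(m).
   1. From the recursion, every B_n (n >= 1) is nonzero with nonnegative
      coefficients, so no cancellation occurs: e(2n) = e(n) + 1 and
      e(2n+1) = max(e(n), e(n+1)); by dyadic induction |d(n)| <= 1.
   2. Block formula: the sum of s over [2^k m, 2^k m + 2^k) is
      s(2^k m) * G_k(d(m)), where G_k(d) (d in {1,0,-1}) satisfies an explicit
      recursion in k obtained by splitting a block into its two halves.
   3. Splitting [1, 2^K) into the blocks [2^k, 2^(k+1)) gives
      S(2^K - 1) = sum_{k<K} (-1)^k G_k(1), and solving the recursion,
      4 S(2^K - 1) = 4 [K odd] - 1 - f_K with f_{k+2} = -f_{k+1} - 2 f_k.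
   4. f_{k+1}^2 + f_{k+1} f_k + 2 f_k^2 = 4 * 2^k; with the recursion this
      prevents f and -f from being eventually bounded above.  Hence
      S(2^K - 1) is unbounded in both directions along K -> oo. *)

Lemma stern_fuel k1 k2 n : (n <= k1)%N -> (n <= k2)%N ->
  stern_aux k1 n = stern_aux k2 n.
Proof.
elim: k1 k2 n => [|k1 IH] [|k2] n h1 h2; try by have -> : n = 0%N by lia.
case: n h1 h2 => [|[|n]] h1 h2 //=.
have := odd_double_half n; case: (odd n) => /= hn.
all: by rewrite (IH k2) ?(IH k2 n./2.+2) //; lia.
Qed.

Lemma stern_aux_double k n : (0 < n)%N -> stern_aux k.+1 n.*2 = 'X * stern_aux k n.
Proof. by case: n => // m _; rewrite doubleS /= odd_double /= ?doubleK ?uphalf_double. Qed.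
Lemma stern_aux_double_succ k n : (0 < n)%N ->
  stern_aux k.+1 n.*2.+1 = stern_aux k n + stern_aux k n.+1.
Proof. by case: n => // m _; rewrite doubleS /= odd_double /= ?doubleK ?uphalf_double. Qed.

Lemma stern_double n : (0 < n)%N -> stern n.*2 = 'X * stern n.
Proof.
case: n => // m _; rewrite /stern {1}doubleS stern_aux_double //.
by rewrite (@stern_fuel _ m.+1 m.+1) //; lia.
Qed.

Lemma stern_double_succ n : (0 < n)%N -> stern n.*2.+1 = stern n + stern n.+1.
Proof.
case: n => // m _; rewrite /stern {1}doubleS stern_aux_double_succ //.
by rewrite (@stern_fuel _ m.+1 m.+1) ?(@stern_fuel _ m.+2 m.+2) //; lia.
Qed.

Definition nonneg_poly (R : numDomainType) (p : {poly R}) := forall i, 0 <= p`_i.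

Lemma size_add_nonneg (R : numDomainType) (p q : {poly R}) :
  nonneg_poly p -> nonneg_poly q -> size (p + q) = maxn (size p) (size q).
Proof.
move=> p_ge0 q_ge0; apply/anti_leq; rewrite size_polyD /= geq_max.
have sum0 j : (size (p + q)%R <= j)%N -> p`_j = 0 /\ q`_j = 0.
  move=> /(elimT (leq_sizeP _ _) (leqnn _)) /eqP; rewrite coefD paddr_eq0 //.
  by case/andP=> /eqP-> /eqP->.
by apply/andP; split; apply/leq_sizeP => j /sum0 [].
Qed.

Lemma dyadic_ind (P : nat -> Prop) : P 1%N ->
  (forall n, (0 < n)%N -> P n -> P n.*2) ->
  (forall n, (0 < n)%N -> P n -> P n.+1 -> P n.*2.+1) ->
  forall n, (0 < n)%N -> P n.
Proof.
move=> P1 P_double P_double_succ; elim/ltn_ind=> n IH n_gt0.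
have [n_le1|n_gt1] := leqP n 1%N; first by have -> : n = 1%N by lia.
have n_half := odd_double_half n; rewrite -n_half.
case: (odd n) n_half => /= n_half.
  by apply: P_double_succ; [|apply: IH..]; lia.
by apply: P_double; [|apply: IH]; lia.
Qed.

Lemma stern_nonneg n : (0 < n)%N -> stern n != 0 /\ nonneg_poly (stern n).
Proof.
move: n; apply: dyadic_ind => [|n n_gt0 [nz pos]|n n_gt0 [nz pos] [_ pos']].
- by split=> [|i]; rewrite ?oner_neq0 // coef1 ler0n.
- rewrite stern_double //; split=> [|i]; first by rewrite mulf_neq0 ?polyX_eq0.
  by rewrite coefXM; case: (i == 0)%N.
- rewrite stern_double_succ //; split=> [|i]; last by rewrite coefD addr_ge0.
  by rewrite -size_poly_eq0 size_add_nonneg // -lt0n leq_max lt0n size_poly_eq0 nz.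
Qed.

Lemma size_stern_gt0 n : (0 < n)%N -> (0 < size (stern n))%N.
Proof. by case/stern_nonneg; rewrite lt0n size_poly_eq0. Qed.

Lemma sdeg_double n : (0 < n)%N -> sdeg n.*2 = (sdeg n).+1.
Proof.
move=> n_gt0; have := size_stern_gt0 n_gt0; have [nz _] := stern_nonneg n_gt0.
by rewrite /sdeg stern_double // mulrC size_mulX //; lia.
Qed.

Lemma sdeg_double_succ n : (0 < n)%N -> sdeg n.*2.+1 = maxn (sdeg n) (sdeg n.+1).
Proof.
move=> n_gt0; have [_ pos1] := stern_nonneg n_gt0; have [_ pos2] := stern_nonneg (ltn0Sn n).
have := size_stern_gt0 n_gt0; have := size_stern_gt0 (ltn0Sn n).
rewrite /sdeg stern_double_succ // size_add_nonneg //.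
by move: (size _) (size _); lia.
Qed.

Lemma sdeg1 : sdeg 1 = 0%N.
Proof. by rewrite /sdeg size_poly1. Qed.

Lemma sdeg_step n : (0 < n)%N ->
  (sdeg n.+1 <= (sdeg n).+1)%N /\ (sdeg n <= (sdeg n.+1).+1)%N.
Proof.
move: n; apply: dyadic_ind => [|n n_gt0 [IHa IHb]|n n_gt0 [IHa IHb] _].
- by rewrite (sdeg_double (n := 1)) // sdeg1.
- by rewrite sdeg_double // sdeg_double_succ //; lia.
- by rewrite -doubleS sdeg_double // sdeg_double_succ //; lia.
Qed.

Definition sgn (n : nat) : int := (-1) ^+ sdeg n.
Definition dstep (m : nat) : int := (sdeg m.+1)%:Z - (sdeg m)%:Z.

Lemma sdeg_pow2 k n : (0 < n)%N -> sdeg (2 ^ k * n) = (sdeg n + k)%N.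
Proof.
move=> n_gt0; elim: k => [|k IH]; first by rewrite mul1n addn0.
by rewrite expnS -mulnA mul2n sdeg_double ?IH ?addnS // muln_gt0 expn_gt0.
Qed.

Lemma sgn_pow2 k n : (0 < n)%N -> sgn (2 ^ k * n) = (-1) ^+ k * sgn n.
Proof. by move=> n_gt0; rewrite /sgn sdeg_pow2 // exprD mulrC. Qed.

Lemma sgn_double m : (0 < m)%N -> sgn m.*2 = - sgn m.
Proof. by move=> m_gt0; rewrite /sgn sdeg_double // exprS mulN1r. Qed.

(* G_k(d): the sum of s over a dyadic block [2^k m, 2^k m + 2^k) divided by its
   first sign s(2^k m), when d(m) = d (see block_sum). *)
Fixpoint blockG (k : nat) (d : int) : int :=
  if k is k'.+1 then
    if d == 1 then blockG k' 1 + blockG k' 0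
    else if d == 0 then blockG k' (-1) - blockG k' 1
    else blockG k' (-1) - blockG k' 0
  else 1.

(* Passing from m to its children 2m and 2m+1 is one step of the recursion of blockG;
   this is where |d(m)| <= 1 is used. *)
Lemma children_blockG k m : (0 < m)%N ->
  sgn m.*2 * blockG k (dstep m.*2) + sgn m.*2.+1 * blockG k (dstep m.*2.+1) =
  - (sgn m * blockG k.+1 (dstep m)).
Proof.
move=> m_gt0; have [st1 st2] := sdeg_step m_gt0.
rewrite /sgn /dstep -doubleS !sdeg_double // sdeg_double_succ //.
move: (sdeg m) (sdeg m.+1) st1 st2 => a b st1 st2.
have up n : (n.+1)%:Z - n%:Z = 1 by lia.
have down n : n%:Z - (n.+1)%:Z = -1 by lia.
have [->|[->|->]] : b = a.+1 \/ b = a \/ a = b.+1 by lia.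
- by rewrite (maxn_idPr (leqnSn a)) !up subrr /= !exprS; ring.
- by rewrite maxnn up down subrr /= !exprS; ring.
- by rewrite (maxn_idPl (leqnSn b)) !down subrr /= !exprS; ring.
Qed.

Lemma block_sum k m : (0 < m)%N ->
  \sum_(2 ^ k * m <= i < 2 ^ k * m + 2 ^ k) sgn i = sgn (2 ^ k * m) * blockG k (dstep m).
Proof.
elim: k m => [|k IH] m m_gt0; first by rewrite mul1n addn1 big_nat1 mulr1.
have -> : (2 ^ k.+1 * m = 2 ^ k * m.*2)%N by rewrite expnS; lia.
have -> : (2 ^ k * m.*2 + 2 ^ k.+1 = 2 ^ k * m.*2.+1 + 2 ^ k)%N by rewrite expnS; lia.
rewrite (@big_cat_nat _ _ _ (2 ^ k * m.*2.+1)); try lia.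
rewrite -{1}(_ : 2 ^ k * m.*2 + 2 ^ k = 2 ^ k * m.*2.+1)%N; last by lia.
rewrite !IH ?double_gt0 // !sgn_pow2 ?double_gt0 // /=.
by rewrite -!mulrA -mulrDr children_blockG // sgn_double //; ring.
Qed.

(* Splitting [1, 2^K) into the dyadic blocks [2^k, 2^(k+1)), each governed by d(1) = 1. *)
Lemma Ssum_pow2 K : Ssum (2 ^ K).-1 = \sum_(k < K) (-1) ^+ k * blockG k 1.
Proof.
rewrite /Ssum prednK ?expn_gt0 //.
elim: K => [|K IH]; first by rewrite big_ord0 big_geq.
rewrite big_ord_recr -IH /= (@big_cat_nat _ _ _ (2 ^ K)) ?expn_gt0 ?leq_exp2l //=.
have dstep1 : dstep 1 = 1 by rewrite /dstep (sdeg_double (n := 1)) // sdeg1.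
have := block_sum K (ltnSn 0); rewrite muln1 addnn -mul2n -expnS => ->.
by rewrite -(muln1 (2 ^ K)%N) sgn_pow2 // /sgn sdeg1 dstep1 mulr1.
Qed.

(* The three block values of order k satisfy G_k(1) + G_k(-1) = 2, hence the
   two-term recursion G_{k+1}(0) = 2 - 2 G_k(1). *)
Lemma blockG_invariant k : blockG k 1 + blockG k (-1) = 2.
Proof. by elim: k => //= k IH; lia. Qed.

Lemma blockG_succ1 k : blockG k.+1 1 = blockG k 1 + blockG k 0.
Proof. by []. Qed.

Lemma blockG_succ0 k : blockG k.+1 0 = 2 - 2 * blockG k 1.
Proof. by have := blockG_invariant k; rewrite /=; lia. Qed.

(* The error term f_k of the closed form of S(2^K - 1). *)
Definition ferr (k : nat) : int := (-1) ^+ k * (blockG k 1 - blockG k 0 - 1).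

Lemma ferr0 : ferr 0 = -1. Proof. by []. Qed.
Lemma ferr1 : ferr 1 = -1. Proof. by []. Qed.

Lemma ferr_rec k : ferr k.+2 = - ferr k.+1 - 2 * ferr k.
Proof.
rewrite /ferr (blockG_succ1 k.+1) (blockG_succ0 k.+1) (blockG_succ0 k) blockG_succ1.
by rewrite !exprS; ring.
Qed.

Lemma Ssum_pow2_ferr K : 4 * Ssum (2 ^ K).-1 = 4 * (odd K)%:R - 1 - ferr K.
Proof.
rewrite Ssum_pow2; elim: K => [|K IH]; first by rewrite big_ord0.
rewrite big_ord_recr /= mulrDr IH /ferr blockG_succ0 blockG_succ1.
by rewrite exprS -signr_odd; case: (odd K); rewrite /=; ring.
Qed.

(* f preserves the positive definite form x^2 + xy + 2y^2 up to the factor 2. *)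
Lemma ferr_norm k : ferr k.+1 ^+ 2 + ferr k.+1 * ferr k + 2 * ferr k ^+ 2 = 4 * 2 ^+ k.
Proof.
elim: k => [|k IH]; first by rewrite ferr0 ferr1.
by rewrite [in RHS]exprS [in RHS]mulrCA -IH ferr_rec; ring.
Qed.

Section Unbounded.
Variable h : nat -> int.
Hypothesis h_rec : forall k, h k.+2 = - h k.+1 - 2 * h k.
Hypothesis h_norm : forall k, h k.+1 ^+ 2 + h k.+1 * h k + 2 * h k ^+ 2 = 4 * 2 ^+ k.

Lemma lower_bound_of_upper K0 M : (forall k, (K0 <= k)%N -> h k <= M) ->
  forall k, (K0 <= k)%N -> - M <= h k.
Proof.
move=> h_le k k_ge; have := h_le k.+1 (leqW k_ge); have := h_le k.+2 (leqW (leqW k_ge)).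
by have := h_rec k; lia.
Qed.

Lemma not_eventually_bounded_above K0 M : ~ (forall k, (K0 <= k)%N -> h k <= M).
Proof.
move=> h_le; have h_ge := lower_bound_of_upper h_le.
pose k := (K0 + `|M| * `|M|)%N.
have k_ge : (K0 <= k)%N by rewrite leq_addr.
have sq_small : (`|M| * `|M| < 2 ^ k)%N.
  by apply: leq_trans (ltn_expl _ (ltnSn 1)) _; rewrite leq_exp2l // leq_addl.
have pow2 : (2 : int) ^+ k = (2 ^ k)%N%:Z by rewrite -natz natrX.
have := h_norm k; rewrite pow2.
have := h_le k k_ge; have := h_ge k k_ge.
have := h_le k.+1 (leqW k_ge); have := h_ge k.+1 (leqW k_ge).
(* |h k|, |h (k+1)| <= |M| bound the form by 4 M^2 < 4 * 2^k. *)
move: (h k) (h k.+1) => x y; nia.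
Qed.

Lemma unbounded_above K0 M : exists2 k, (K0 <= k)%N & M < h k.
Proof.
apply: NNPP => no_k; apply: (not_eventually_bounded_above (K0 := K0) (M := M)) => k k_ge.
by rewrite leNgt; apply/negP => lt_M; apply: no_k; exists k.
Qed.

End Unbounded.

(* Along n = 2^K - 1 (with K >= N, so n >= N), 4 S(n) lies within 4 of -f_K. *)
Theorem mainTheorem16 :
  (forall (M : int) (N : nat), exists2 n : nat, (N <= n)%N & Ssum n <= M) /\
  (forall (M : int) (N : nat), exists2 n : nat, (N <= n)%N & M <= Ssum n).
Proof.
have idx_ge N K : (N <= K)%N -> (N <= (2 ^ K).-1)%N.
  by move=> N_le; have := ltn_expl K (ltnSn 1); lia.
have opp_rec k : - ferr k.+2 = - - ferr k.+1 - 2 * - ferr k by rewrite ferr_rec; ring.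
have opp_norm k : (- ferr k.+1) ^+ 2 + (- ferr k.+1) * (- ferr k) + 2 * (- ferr k) ^+ 2
    = 4 * 2 ^+ k by rewrite -ferr_norm; ring.
split=> M N.
- have [K K_ge f_big] := unbounded_above ferr_rec ferr_norm N (3 - 4 * M).
  exists (2 ^ K).-1; first exact: idx_ge.
  by have := Ssum_pow2_ferr K; case: (odd K); lia.
- have [K K_ge f_small] := unbounded_above opp_rec opp_norm N (4 * M + 1).
  exists (2 ^ K).-1; first exact: idx_ge.
  by have := Ssum_pow2_ferr K; case: (odd K); lia.
Qed.
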